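(* Let $\{c_n\}_{n\ge0}$ be a real sequence with $\{c_n\}\in NBVS$, and suppose $f(x)=\sum_{n=0}^\infty c_n\cos nx$ converges for every $x$ and $f\in C_{2\pi}$. Let $S_n(f,x)=\sum_{k=0}^nc_k\cos kx$. If $$\sum_{k=n+1}^{2n}c_k=O\Big(\max_{1\le k\le n}kc_{n+k}\Big)\quad(n\to\infty),$$ then $\|f-S_n(f)\|=O(E_n(f))$.
   Context: For $\theta_0\in[0,\pi/2)$ let $M(\theta_0)=\{z\in\mathbb C: |\arg z|\le\theta_0\}$ (with $0\in M(\theta_0)$). Write $\Delta c_n=c_n-c_{n+1}$. A complex sequence $\mathbf C=\{c_n\}$ belongs to $NBVS$ if there is $\theta_0\in[0,\pi/2)$ with $c_n\in M(\theta_0)$ for all $n\ge1$ and a constant $K(\mathbf C)>0$ such that $\sum_{n=m}^{2m}|\Delta c_n|\le K(\mathbf C)\big(|c_m|+|c_{2m}|\big)$ for all $m\ge1$ (so a real sequence in $NBVS$ is nonnegative for $n\ge1$). $C_{2\pi}$ is the space of continuous $2\pi$-periodic functions with $\|g\|=\max_x|g(x)|$; $E_n(f)$ is the best uniform approximation of $f$ by trigonometric polynomials of degree at most $n$. *)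

From Stdlib Require Import Reals List.
From Coquelicot Require Import Coquelicot.
Open Scope R_scope.

(* M(theta0) = { z : |arg z| <= theta0 } together with 0.  Since theta0 < pi/2,
   |arg z| <= theta0 for z <> 0 means z = r e^{i theta} with r > 0, |theta| <= theta0. *)
Definition inM (theta0 : R) (z : C) : Prop :=
  z = 0%C \/
  exists r th : R, 0 < r /\ Rabs th <= theta0 /\ z = (r * cos th, r * sin th)%R.

(* NBVS for a complex sequence c (indexed from 0; conditions for n, m >= 1). *)
Definition NBVS (c : nat -> C) : Prop :=
  (exists theta0 : R, 0 <= theta0 < PI / 2 /\
     forall n : nat, (1 <= n)%nat -> inM theta0 (c n)) /\
  (exists K : R, 0 < K /\
     forall m : nat, (1 <= m)%nat ->
       sum_n_m (fun n => Cmod (c n - c (S n))%C) m (2 * m)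
         <= K * (Cmod (c m) + Cmod (c (2 * m)%nat))).

Definition supnorm (g : R -> R) : Rbar :=
  Lub_Rbar (fun y => exists x : R, y = Rabs (g x)).

Definition trig_poly (n : nat) (T : R -> R) : Prop :=
  exists a b : nat -> R, forall x : R,
    T x = a O + sum_n_m (fun k => a k * cos (INR k * x) + b k * sin (INR k * x)) 1 n.

Definition En (n : nat) (f : R -> R) : Rbar :=
  Glb_Rbar (fun e => exists T, trig_poly n T /\ supnorm (fun x => f x - T x) = Finite e).

Definition Sn (c : nat -> R) (n : nat) (x : R) : R :=
  sum_n (fun k => c k * cos (INR k * x)) n.

Definition maxkc (c : nat -> R) (n : nat) : R :=
  fold_right Rmax (c (S n)) (map (fun k => INR k * c (n + k)%nat) (seq 1 n)).

From Stdlib Require Import Reals List Lia Lra ZArith Znumtheory.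
From Coquelicot Require Import Coquelicot.
Open Scope R_scope.

(* Let [T] be a trigonometric polynomial of degree [n] with [|f - T| <= e]. Since [c_k >= 0],
   pairing [f - T] with a nonnegative cosine kernel that annihilates [T] bounds a weighted sum of
   the [c_k] by [O(e)]: the de la Vallée-Poussin kernel at [0] gives [sum_{k >= 2n} c_k <= 4e], and
   [2 cos (N x)] times a Fejér kernel of order [2t] gives [sum_{|k - N| <= t} c_k <= 4e] for
   [N > n + 2t]. The NBVS condition turns such block sums into [k c_(n+k) = O(e)] for [k <= n],
   so the hypothesis bounds [sum_{n < k <= 2n} c_k], and [|f - S_n f| <= sum_{k > n} c_k = O(e)].
   Integrals are replaced by averages over the [M]-th roots of unity, which are exact on
   cosine polynomials of degree below [M]; the aliased high frequencies are made negligible by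
   taking [M] large. *)

(* [rsum n f] is [f 0 + ... + f (n-1)]; unlike [sum_n_m] it has an empty case. *)
Fixpoint rsum (n : nat) (f : nat -> R) : R :=
  match n with O => 0 | S n => rsum n f + f n end.

Lemma rsum_ext n f g : (forall i, (i < n)%nat -> f i = g i) -> rsum n f = rsum n g.
Proof.
induction n as [|n IH]; intros H; simpl; auto.
rewrite IH by (intros; apply H; lia). rewrite H by lia. reflexivity.
Qed.

Lemma rsum_plus n f g : rsum n (fun i => f i + g i) = rsum n f + rsum n g.
Proof. induction n as [|n IH]; simpl; [|rewrite IH]; lra. Qed.

Lemma rsum_scal n a f : rsum n (fun i => a * f i) = a * rsum n f.
Proof. induction n as [|n IH]; simpl; [|rewrite IH]; lra. Qed.

Lemma rsum_mulr n f u : rsum n f * u = rsum n (fun i => f i * u).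
Proof. rewrite Rmult_comm, <- rsum_scal. apply rsum_ext; intros; ring. Qed.

Lemma rsum_const n a : rsum n (fun _ => a) = INR n * a.
Proof. induction n as [|n IH]; simpl rsum; [simpl; lra|]. rewrite IH, S_INR; lra. Qed.

Lemma rsum_zero n f : (forall i, (i < n)%nat -> f i = 0) -> rsum n f = 0.
Proof. intros H. rewrite (rsum_ext n f (fun _ => 0)), rsum_const by auto; lra. Qed.

Lemma rsum_le n f g : (forall i, (i < n)%nat -> f i <= g i) -> rsum n f <= rsum n g.
Proof.
induction n as [|n IH]; intros H; simpl; [lra|].
assert (f n <= g n) by (apply H; lia).
assert (rsum n f <= rsum n g) by (apply IH; intros; apply H; lia). lra.
Qed.

Lemma rsum_nonneg n f : (forall i, (i < n)%nat -> 0 <= f i) -> 0 <= rsum n f.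
Proof.
intros H. apply Rle_trans with (rsum n (fun _ => 0)).
- rewrite rsum_const; lra.
- apply rsum_le; auto.
Qed.

Lemma rsum_abs n f : Rabs (rsum n f) <= rsum n (fun i => Rabs (f i)).
Proof.
induction n as [|n IH]; simpl; [rewrite Rabs_R0; lra|].
eapply Rle_trans; [apply Rabs_triang|lra].
Qed.

Lemma rsum_term_le n j f :
  (j < n)%nat -> (forall i, (i < n)%nat -> 0 <= f i) -> f j <= rsum n f.
Proof.
induction n as [|n IH]; intros Hj H; simpl; [lia|].
destruct (Nat.eq_dec j n) as [->|Hne].
- assert (0 <= rsum n f) by (apply rsum_nonneg; intros; apply H; lia). lra.
- assert (f j <= rsum n f) by (apply IH; [lia|intros; apply H; lia]).
  assert (0 <= f n) by (apply H; lia). lra.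
Qed.

Lemma rsum_split p q f : rsum (p + q) f = rsum p f + rsum q (fun i => f (p + i)%nat).
Proof.
induction q as [|q IH]; simpl; [rewrite Nat.add_0_r; lra|].
rewrite Nat.add_succ_r; simpl. rewrite IH; lra.
Qed.

Lemma rsum_swap n m F :
  rsum n (fun i => rsum m (fun j => F i j)) = rsum m (fun j => rsum n (fun i => F i j)).
Proof.
induction n as [|n IH]; simpl.
- rewrite rsum_zero; auto.
- rewrite IH, <- rsum_plus. reflexivity.
Qed.

Lemma rsum_shift n f : rsum (S n) f = f O + rsum n (fun i => f (S i)).
Proof. induction n as [|n IH]; simpl in *; [|rewrite IH]; lra. Qed.

Lemma rsum_rev n f : rsum n f = rsum n (fun i => f (n - 1 - i)%nat).
Proof.
induction n as [|n IH]; auto.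
rewrite (rsum_shift n (fun i => f (S n - 1 - i)%nat)).
simpl rsum at 1. rewrite IH. replace (S n - 1 - 0)%nat with n by lia.
rewrite (rsum_ext n (fun i => f (n - 1 - i)%nat) (fun i => f (S n - 1 - S i)%nat)).
- lra.
- intros; f_equal; lia.
Qed.

Lemma rsum_indicator s k :
  rsum s (fun a => if Nat.eqb (S a) k then 1 else 0)
  = if andb (Nat.leb 1 k) (Nat.leb k s) then 1 else 0.
Proof.
induction s as [|s IH]; cbn [rsum]; [destruct k; reflexivity|].
rewrite IH.
destruct (Nat.eqb_spec (S s) k), (Nat.leb_spec 1 k), (Nat.leb_spec k s),
  (Nat.leb_spec k (S s)); simpl; lra || lia.
Qed.

Lemma rsum_pairs (g : nat -> R) a p :
  rsum p (fun j => g (2 * (a + j))%nat + g (2 * (a + j) + 1)%nat)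
  = rsum (2 * p) (fun l => g (2 * a + l)%nat).
Proof.
induction p as [|p IH]; [reflexivity|].
replace (2 * S p)%nat with (S (S (2 * p))) by lia. cbn [rsum]. rewrite IH.
replace (2 * (a + p))%nat with (2 * a + 2 * p)%nat by lia.
replace (2 * a + 2 * p + 1)%nat with (2 * a + S (2 * p))%nat by lia. ring.
Qed.

Lemma sum_n_m_rsum f m n : sum_n_m f m n = rsum (S n - m) (fun i => f (m + i)%nat).
Proof.
induction n as [|n IH].
- destruct m; simpl.
  + rewrite sum_n_n; lra.
  + rewrite sum_n_m_zero by lia. reflexivity.
- destruct (le_lt_dec m (S n)).
  + rewrite sum_n_Sm, IH by lia.
    replace (S (S n) - m)%nat with (S (S n - m)) by lia. cbn [rsum].
    replace (m + (S n - m))%nat with (S n) by lia. reflexivity.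
  + rewrite sum_n_m_zero by lia. replace (S (S n) - m)%nat with O by lia. reflexivity.
Qed.

Lemma sum_n_rsum f n : sum_n f n = rsum (S n) f.
Proof.
unfold sum_n. rewrite sum_n_m_rsum. replace (S n - 0)%nat with (S n) by lia. reflexivity.
Qed.

(** * Averages over the [M]-th roots of unity *)

Definition cosz (p : Z) (x : R) := cos (IZR p * x).
Definition sinz (p : Z) (x : R) := sin (IZR p * x).

Lemma cosz_0 x : cosz 0 x = 1.
Proof. unfold cosz. rewrite Rmult_0_l. apply cos_0. Qed.

Lemma cos_INR_cosz k x : cos (INR k * x) = cosz (Z.of_nat k) x.
Proof. unfold cosz. rewrite INR_IZR_INZ. reflexivity. Qed.

Lemma sin_INR_sinz k x : sin (INR k * x) = sinz (Z.of_nat k) x.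
Proof. unfold sinz. rewrite INR_IZR_INZ. reflexivity. Qed.

Lemma Rabs_cosz_le p x : Rabs (cosz p x) <= 1.
Proof. apply Rabs_le, COS_bound. Qed.

Lemma cosz_mul p q x : cosz p x * cosz q x = / 2 * (cosz (p + q) x + cosz (p - q) x).
Proof.
unfold cosz. rewrite plus_IZR, minus_IZR, !Rmult_plus_distr_r, Rmult_minus_distr_r.
rewrite cos_plus, cos_minus. field.
Qed.

Lemma sinz_mul_cosz p q x : sinz p x * cosz q x = / 2 * (sinz (p + q) x + sinz (p - q) x).
Proof.
unfold cosz, sinz. rewrite plus_IZR, minus_IZR, !Rmult_plus_distr_r, Rmult_minus_distr_r.
rewrite sin_plus, sin_minus. field.
Qed.

Lemma cosz_mul3 p q r x :
  4 * cosz p x * cosz q x * cosz r x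
  = cosz (p + q + r) x + cosz (p + q - r) x + cosz (p - q + r) x + cosz (p - q - r) x.
Proof.
replace (4 * cosz p x * cosz q x * cosz r x) with (4 * (cosz p x * cosz q x * cosz r x)) by ring.
rewrite cosz_mul, Rmult_assoc, Rmult_plus_distr_r, !cosz_mul. field.
Qed.

Lemma sin_IZR_2PI z : sin (IZR z * (2 * PI)) = 0.
Proof. apply sin_eq_0_1. exists (2 * z)%Z. rewrite mult_IZR. simpl. ring. Qed.

Lemma cos_IZR_2PI z : cos (IZR z * (2 * PI)) = 1.
Proof.
replace (IZR z * (2 * PI)) with (2 * (IZR z * PI)) by ring.
rewrite cos_2a_sin, sin_eq_0_1 by (exists z; reflexivity). ring.
Qed.

(* Both telescope via [2 sin(t/2) cos(jt) = sin((j+1/2)t) - sin((j-1/2)t)]. *)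
Lemma rsum_cos_telescope t m :
  2 * sin (t / 2) * rsum m (fun j => cos (INR j * t)) = sin (INR m * t - t / 2) + sin (t / 2).
Proof.
induction m as [|m IH].
- simpl. replace (0 * t - t / 2) with (- (t / 2)) by ring. rewrite sin_neg. lra.
- cbn [rsum]. rewrite Rmult_plus_distr_l, IH, S_INR.
  replace ((INR m + 1) * t - t / 2) with (INR m * t + t / 2) by field.
  rewrite sin_plus, sin_minus. ring.
Qed.

Lemma rsum_sin_telescope t m :
  2 * sin (t / 2) * rsum m (fun j => sin (INR j * t)) = cos (t / 2) - cos (INR m * t - t / 2).
Proof.
induction m as [|m IH].
- simpl. replace (0 * t - t / 2) with (- (t / 2)) by ring. rewrite cos_neg. lra.
- cbn [rsum]. rewrite Rmult_plus_distr_l, IH, S_INR.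
  replace ((INR m + 1) * t - t / 2) with (INR m * t + t / 2) by field.
  rewrite cos_plus, cos_minus. ring.
Qed.

Definition grid (M j : nat) := 2 * PI * INR j / INR M.

Definition avg (M : nat) (h : R -> R) := rsum M (fun j => h (grid M j)) / INR M.

Section Averages.

Variable M : nat.
Hypothesis M_pos : (0 < M)%nat.

Let INR_M_pos : 0 < INR M.
Proof. apply lt_0_INR, M_pos. Qed.

Lemma IZR_mul_grid p j : IZR p * grid M j = INR j * (IZR p * 2 * PI / INR M).
Proof. unfold grid, Rdiv. ring. Qed.

Lemma IZR_mul_grid_dvd q j :
  IZR (q * Z.of_nat M) * grid M j = IZR (q * Z.of_nat j) * (2 * PI).
Proof. unfold grid. rewrite !mult_IZR, <- !INR_IZR_INZ. field. lra. Qed.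

Lemma sin_half_step_neq0 p :
  ~ (Z.of_nat M | p)%Z -> sin (IZR p * 2 * PI / INR M / 2) <> 0.
Proof.
intros Hndvd Hsin. apply sin_eq_0_0 in Hsin as [k Hk]. apply Hndvd. exists k.
apply eq_IZR. rewrite mult_IZR, <- INR_IZR_INZ.
assert (0 < PI / INR M) by (apply Rdiv_lt_0_compat; [apply PI_RGT_0|lra]).
apply (Rmult_eq_reg_r (PI / INR M)); [|lra].
replace (IZR p * (PI / INR M)) with (IZR p * 2 * PI / INR M / 2) by (field; lra).
rewrite Hk. field. lra.
Qed.

Lemma avg_cosz_dvd p : (Z.of_nat M | p)%Z -> avg M (cosz p) = 1.
Proof.
intros [q ->]. unfold avg. rewrite (rsum_ext M _ (fun _ => 1)), rsum_const.
- field. lra.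
- intros j _. unfold cosz. rewrite IZR_mul_grid_dvd. apply cos_IZR_2PI.
Qed.

Lemma avg_cosz_ndvd p : ~ (Z.of_nat M | p)%Z -> avg M (cosz p) = 0.
Proof.
intros Hndvd. set (t := IZR p * 2 * PI / INR M). unfold avg.
rewrite (rsum_ext M _ (fun j => cos (INR j * t))).
2: { intros j _. unfold cosz. rewrite IZR_mul_grid. reflexivity. }
enough (rsum M (fun j => cos (INR j * t)) = 0) as -> by (unfold Rdiv; ring).
apply (Rmult_eq_reg_l (2 * sin (t / 2))).
2: { pose proof (sin_half_step_neq0 p Hndvd). fold t in H. lra. }
rewrite rsum_cos_telescope.
replace (INR M * t) with (IZR p * (2 * PI)) by (unfold t; field; lra).
rewrite sin_minus, sin_IZR_2PI, cos_IZR_2PI. ring.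
Qed.

Lemma avg_sinz p : avg M (sinz p) = 0.
Proof.
unfold avg. enough (rsum M (fun j => sinz p (grid M j)) = 0) as -> by (unfold Rdiv; ring).
destruct (Zdivide_dec (Z.of_nat M) p) as [[q ->]|Hndvd].
- apply rsum_zero. intros j _. unfold sinz. rewrite IZR_mul_grid_dvd. apply sin_IZR_2PI.
- set (t := IZR p * 2 * PI / INR M).
  rewrite (rsum_ext M _ (fun j => sin (INR j * t))).
  2: { intros j _. unfold sinz. rewrite IZR_mul_grid. reflexivity. }
  apply (Rmult_eq_reg_l (2 * sin (t / 2))).
  2: { pose proof (sin_half_step_neq0 p Hndvd). fold t in H. lra. }
  rewrite rsum_sin_telescope.
  replace (INR M * t) with (IZR p * (2 * PI)) by (unfold t; field; lra).
  rewrite cos_minus, sin_IZR_2PI, cos_IZR_2PI. ring.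
Qed.

Lemma avg_cosz_bounds p : 0 <= avg M (cosz p) <= 1.
Proof.
destruct (Zdivide_dec (Z.of_nat M) p).
- rewrite avg_cosz_dvd by assumption. lra.
- rewrite avg_cosz_ndvd by assumption. lra.
Qed.

Lemma avg_cosz0 : avg M (cosz 0) = 1.
Proof. apply avg_cosz_dvd, Z.divide_0_r. Qed.

Lemma avg_cosz_small p : (0 < Z.abs p < Z.of_nat M)%Z -> avg M (cosz p) = 0.
Proof.
intros Hp. apply avg_cosz_ndvd. intros Hdvd. apply Zdivide_bounds in Hdvd; lia.
Qed.

Lemma avg_ext h1 h2 : (forall x, h1 x = h2 x) -> avg M h1 = avg M h2.
Proof. intros H. unfold avg. f_equal. apply rsum_ext. auto. Qed.

Lemma avg_plus h1 h2 : avg M (fun x => h1 x + h2 x) = avg M h1 + avg M h2.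
Proof. unfold avg. rewrite rsum_plus. unfold Rdiv; ring. Qed.

Lemma avg_scal a h : avg M (fun x => a * h x) = a * avg M h.
Proof. unfold avg. rewrite rsum_scal. unfold Rdiv; ring. Qed.

Lemma avg_rsum n F : avg M (fun x => rsum n (fun i => F i x)) = rsum n (fun i => avg M (F i)).
Proof.
unfold avg. rewrite rsum_swap. unfold Rdiv. rewrite Rmult_comm, <- rsum_scal.
apply rsum_ext. intros; ring.
Qed.

Lemma avg_le h1 h2 : (forall x, h1 x <= h2 x) -> avg M h1 <= avg M h2.
Proof.
intros H. unfold avg, Rdiv. apply Rmult_le_compat_r.
- left. apply Rinv_0_lt_compat. lra.
- apply rsum_le. auto.
Qed.

Lemma Rabs_avg_le h : Rabs (avg M h) <= avg M (fun x => Rabs (h x)).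
Proof.
unfold avg, Rdiv. rewrite Rabs_mult, (Rabs_right (/ INR M)).
- apply Rmult_le_compat_r; [left; apply Rinv_0_lt_compat; lra|apply rsum_abs].
- left. apply Rinv_0_lt_compat. lra.
Qed.

Lemma Rabs_avg_mul_le h g e B :
  (forall x, Rabs (g x) <= e) -> (forall x, Rabs (h x) <= B x) ->
  Rabs (avg M (fun x => h x * g x)) <= e * avg M B.
Proof.
intros Hg Hh. eapply Rle_trans; [apply Rabs_avg_le|].
rewrite <- avg_scal. apply avg_le. intros x. rewrite Rabs_mult.
pose proof (Hg x). pose proof (Hh x). pose proof (Rabs_pos (g x)). pose proof (Rabs_pos (h x)).
nra.
Qed.

End Averages.

Definition cos_poly (h : R -> R) := exists L (al : nat -> R) (p : nat -> Z),
  forall x, h x = rsum L (fun i => al i * cosz (p i) x).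

Lemma cos_poly_ext h1 h2 : (forall x, h1 x = h2 x) -> cos_poly h1 -> cos_poly h2.
Proof. intros E [L [al [p H]]]. exists L, al, p. intros x. rewrite <- E. auto. Qed.

Lemma cos_poly_cosz q : cos_poly (cosz q).
Proof. exists 1%nat, (fun _ => 1), (fun _ => q). intros x. simpl. ring. Qed.

Lemma cos_poly_zero : cos_poly (fun _ => 0).
Proof. exists 0%nat, (fun _ => 0), (fun _ => 0%Z). reflexivity. Qed.

Lemma cos_poly_plus h1 h2 : cos_poly h1 -> cos_poly h2 -> cos_poly (fun x => h1 x + h2 x).
Proof.
intros [L1 [a1 [p1 H1]]] [L2 [a2 [p2 H2]]].
exists (L1 + L2)%nat, (fun i => if Nat.ltb i L1 then a1 i else a2 (i - L1)%nat),
  (fun i => if Nat.ltb i L1 then p1 i else p2 (i - L1)%nat).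
intros x. rewrite rsum_split, H1, H2. f_equal.
- apply rsum_ext. intros i Hi. destruct (Nat.ltb_spec i L1); [reflexivity|lia].
- apply rsum_ext. intros i _. destruct (Nat.ltb_spec (L1 + i) L1); [lia|].
  replace (L1 + i - L1)%nat with i by lia. reflexivity.
Qed.

Lemma cos_poly_scal a h : cos_poly h -> cos_poly (fun x => a * h x).
Proof.
intros [L [al [p H]]]. exists L, (fun i => a * al i), p. intros x.
rewrite H, <- rsum_scal. apply rsum_ext. intros; ring.
Qed.

Lemma cos_poly_rsum n F : (forall i, cos_poly (F i)) -> cos_poly (fun x => rsum n (fun i => F i x)).
Proof.
intros HF. induction n as [|n IH]; simpl; [apply cos_poly_zero|apply cos_poly_plus; auto].
Qed.

Lemma cos_poly_const a : cos_poly (fun _ => a).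
Proof.
apply (cos_poly_ext (fun x => a * cosz 0 x)).
- intros x. rewrite cosz_0. ring.
- apply cos_poly_scal, cos_poly_cosz.
Qed.

Lemma cos_poly_mul_cosz h q : cos_poly h -> cos_poly (fun x => h x * cosz q x).
Proof.
intros [L [al [p H]]].
apply (cos_poly_ext (fun x => rsum L (fun i =>
  al i * / 2 * cosz (p i + q) x + al i * / 2 * cosz (p i - q) x))).
- intros x. symmetry. rewrite H, rsum_mulr. apply rsum_ext. intros i _.
  rewrite Rmult_assoc, (cosz_mul (p i) q x). ring.
- apply cos_poly_rsum. intros i. apply cos_poly_plus; apply cos_poly_scal, cos_poly_cosz.
Qed.

Section Averaging_against_cos_poly.

Variable M : nat.
Hypothesis M_pos : (0 < M)%nat.
Variable h : R -> R.
Hypothesis h_cos_poly : cos_poly h.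

(* h is even, so it is discretely orthogonal to every sine. *)
Lemma avg_cos_poly_mul_sinz k : avg M (fun x => h x * sinz k x) = 0.
Proof.
destruct h_cos_poly as [L [al [p H]]].
rewrite (avg_ext M _ (fun x => rsum L (fun i =>
  al i * / 2 * sinz (k + p i) x + al i * / 2 * sinz (k - p i) x))).
- rewrite avg_rsum. apply rsum_zero. intros i _.
  rewrite avg_plus, !avg_scal, !avg_sinz by exact M_pos. ring.
- intros x. rewrite H, rsum_mulr. apply rsum_ext. intros i _.
  rewrite Rmult_assoc, (Rmult_comm (cosz _ _)), (sinz_mul_cosz k (p i) x). ring.
Qed.

Lemma avg_cos_poly_mul_trig n (a b : nat -> R) T :
  (forall x, T x = a O + sum_n_m (fun k => a k * cos (INR k * x) + b k * sin (INR k * x)) 1 n) ->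
  avg M (fun x => h x * T x)
  = a O * avg M h + rsum n (fun i => a (S i) * avg M (fun x => h x * cosz (Z.of_nat (S i)) x)).
Proof.
intros HT.
rewrite (avg_ext M _ (fun x => a O * h x + rsum n (fun i =>
  a (S i) * (h x * cosz (Z.of_nat (S i)) x) + b (S i) * (h x * sinz (Z.of_nat (S i)) x)))).
- rewrite avg_plus, avg_scal, avg_rsum. f_equal. apply rsum_ext. intros i _.
  rewrite avg_plus, !avg_scal, avg_cos_poly_mul_sinz. ring.
- intros x. rewrite HT, sum_n_m_rsum. replace (S n - 1)%nat with n by lia.
  rewrite Rmult_plus_distr_l. f_equal; [ring|].
  rewrite Rmult_comm, rsum_mulr. apply rsum_ext. intros i _. simpl (1 + i)%nat.
  rewrite cos_INR_cosz, sin_INR_sinz. ring.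
Qed.

End Averaging_against_cos_poly.

Lemma is_series_R0 : is_series (fun _ : nat => 0) 0.
Proof.
apply (filterlim_ext (fun _ => 0)); [|apply filterlim_const].
intros n. symmetry. apply (sum_n_m_const_zero (G := R_AbelianMonoid)).
Qed.

Lemma avg_mul_series M h (c : nat -> R) f : (0 < M)%nat ->
  (forall x, is_series (fun k => c k * cos (INR k * x)) (f x)) ->
  is_series (fun k => c k * avg M (fun x => h x * cosz (Z.of_nat k) x))
            (avg M (fun x => h x * f x)).
Proof.
intros HM Hf.
assert (Hpart : forall m,
  is_series (fun k => rsum m (fun j => c k * (h (grid M j) * cos (INR k * grid M j))))
            (rsum m (fun j => h (grid M j) * f (grid M j)))).
{ induction m as [|m IH]; simpl; [apply is_series_R0|].
  apply (is_series_plus _ _ _ _ IH).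
  apply (is_series_ext (fun k => h (grid M m) * (c k * cos (INR k * grid M m)))).
  - intros; simpl; ring.
  - apply (is_series_scal_l (h (grid M m)) _ (f (grid M m))). auto. }
unfold avg, Rdiv.
apply (is_series_ext (fun k =>
  / INR M * rsum M (fun j => c k * (h (grid M j) * cos (INR k * grid M j))))).
- intros k. rewrite <- rsum_scal, Rmult_comm, rsum_mulr, rsum_mulr.
  apply rsum_ext. intros j _. rewrite cos_INR_cosz. ring.
- rewrite Rmult_comm.
  apply (is_series_scal_l (/ INR M) _ (rsum M (fun j => h (grid M j) * f (grid M j)))). auto.
Qed.

(** * Dirichlet and Fejér kernels *)

Definition dirichlet (s : nat) (x : R) := 1 + 2 * rsum s (fun a => cosz (Z.of_nat (S a)) x).

(* [fejer r] is [r] times the Fejér kernel of order [r - 1]. *)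
Definition fejer (r : nat) (x : R) := rsum r (fun s => dirichlet s x).

Lemma cos_poly_dirichlet s : cos_poly (dirichlet s).
Proof.
apply cos_poly_plus; [apply cos_poly_const|].
apply cos_poly_scal, cos_poly_rsum. intros; apply cos_poly_cosz.
Qed.

Lemma cos_poly_fejer r : cos_poly (fejer r).
Proof. apply cos_poly_rsum. intros; apply cos_poly_dirichlet. Qed.

Lemma fejer_sq r x :
  fejer r x = (rsum r (fun a => cosz (Z.of_nat a) x)) ^ 2
              + (rsum r (fun a => sinz (Z.of_nat a) x)) ^ 2.
Proof.
induction r as [|r IH]; [unfold fejer; simpl; ring|].
unfold fejer in *. cbn [rsum]. rewrite IH. unfold dirichlet.
set (P := rsum r (fun a => cosz (Z.of_nat a) x)).
set (Q := rsum r (fun a => sinz (Z.of_nat a) x)).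
set (u := cosz (Z.of_nat r) x). set (v := sinz (Z.of_nat r) x).
assert (Hshift : rsum r (fun a => cosz (Z.of_nat (S a)) x) = P * u + Q * v).
{ unfold P, Q. rewrite !rsum_mulr, <- rsum_plus, (rsum_rev r (fun i => _ + _)).
  apply rsum_ext. intros i Hi. unfold u, v, cosz, sinz.
  rewrite (Rmult_comm (cos _)), (Rmult_comm (sin _)), <- cos_minus,
    <- Rmult_minus_distr_r, <- minus_IZR.
  do 3 f_equal. lia. }
assert (Hpyth : v * v + u * u = 1) by apply sin2_cos2.
rewrite Hshift. transitivity (P ^ 2 + Q ^ 2 + (v * v + u * u) + 2 * (P * u + Q * v));
  [rewrite Hpyth|]; ring.
Qed.

Lemma fejer_nonneg r x : 0 <= fejer r x.
Proof. rewrite fejer_sq. nra. Qed.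

Section Kernel_averages.

Variable M : nat.
Hypothesis M_pos : (0 < M)%nat.

Let avg_cosz_nonneg p : 0 <= avg M (cosz p).
Proof. apply avg_cosz_bounds, M_pos. Qed.

Lemma avg_dirichlet_mul_cosz s k :
  avg M (fun x => dirichlet s x * cosz k x)
  = avg M (cosz k)
    + rsum s (fun a => avg M (cosz (Z.of_nat (S a) + k)) + avg M (cosz (Z.of_nat (S a) - k))).
Proof.
rewrite (avg_ext M _ (fun x => cosz k x
  + rsum s (fun a => cosz (Z.of_nat (S a) + k) x + cosz (Z.of_nat (S a) - k) x))).
- rewrite avg_plus, avg_rsum. f_equal. apply rsum_ext. intros. apply avg_plus.
- intros x. unfold dirichlet. rewrite Rmult_plus_distr_r, Rmult_1_l, Rmult_assoc, rsum_mulr.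
  f_equal. rewrite <- rsum_scal. apply rsum_ext. intros. rewrite cosz_mul. field.
Qed.

(* For [s + k < M] no aliasing occurs, and the weights are exactly those of [D_s]. *)
Lemma avg_dirichlet_mul_cosz_exact s k : (s + k < M)%nat ->
  avg M (fun x => dirichlet s x * cosz (Z.of_nat k) x)
  = (if Nat.eqb k 0 then 1 else 0) + (if andb (Nat.leb 1 k) (Nat.leb k s) then 1 else 0).
Proof.
intros Hk. rewrite avg_dirichlet_mul_cosz. f_equal.
- destruct (Nat.eqb_spec k 0) as [->|]; [apply avg_cosz0, M_pos|].
  apply avg_cosz_small; [exact M_pos|lia].
- rewrite <- rsum_indicator. apply rsum_ext. intros a Ha.
  rewrite (avg_cosz_small M M_pos (Z.of_nat (S a) + Z.of_nat k)) by lia.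
  destruct (Nat.eqb_spec (S a) k).
  + replace (Z.of_nat (S a) - Z.of_nat k)%Z with 0%Z by lia. rewrite avg_cosz0 by exact M_pos. ring.
  + rewrite avg_cosz_small by (exact M_pos || lia). ring.
Qed.

Lemma avg_dirichlet_mul_cosz_bounds s k :
  0 <= avg M (fun x => dirichlet s x * cosz k x) <= 1 + 2 * INR s.
Proof.
rewrite avg_dirichlet_mul_cosz.
assert (Hterm : forall a,
  0 <= avg M (cosz (Z.of_nat (S a) + k)) + avg M (cosz (Z.of_nat (S a) - k)) <= 2).
{ intros a. pose proof (avg_cosz_bounds M M_pos (Z.of_nat (S a) + k)).
  pose proof (avg_cosz_bounds M M_pos (Z.of_nat (S a) - k)). lra. }
pose proof (avg_cosz_bounds M M_pos k).
assert (0 <= rsum s (fun a =>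
  avg M (cosz (Z.of_nat (S a) + k)) + avg M (cosz (Z.of_nat (S a) - k))))
  by (apply rsum_nonneg; intros; apply Hterm).
assert (rsum s (fun a => avg M (cosz (Z.of_nat (S a) + k)) + avg M (cosz (Z.of_nat (S a) - k)))
        <= rsum s (fun _ => 2)) by (apply rsum_le; intros; apply Hterm).
rewrite rsum_const in *. lra.
Qed.

Lemma avg_fejer r : (r <= M)%nat -> avg M (fejer r) = INR r.
Proof.
intros Hr. unfold fejer. rewrite avg_rsum, (rsum_ext _ _ (fun _ => 1)), rsum_const; [ring|].
intros s Hs. rewrite (avg_ext M _ (fun x => dirichlet s x * cosz (Z.of_nat 0) x))
  by (intros; rewrite cosz_0; ring).
rewrite avg_dirichlet_mul_cosz_exact by lia. simpl. ring.
Qed.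

(* [2 cos (N x)] moves the weights of [D_s] to frequencies around [N] and [-N]. *)
Lemma avg_modulated_dirichlet N s k :
  avg M (fun x => 2 * cosz N x * dirichlet s x * cosz k x)
  = avg M (cosz (N + k)) + avg M (cosz (N - k)) +
    rsum s (fun a => avg M (cosz (N + Z.of_nat (S a) + k)) + avg M (cosz (N + Z.of_nat (S a) - k))
                   + avg M (cosz (N - Z.of_nat (S a) + k)) + avg M (cosz (N - Z.of_nat (S a) - k))).
Proof.
rewrite (avg_ext M _ (fun x => cosz (N + k) x + cosz (N - k) x +
  rsum s (fun a => cosz (N + Z.of_nat (S a) + k) x + cosz (N + Z.of_nat (S a) - k) x
                 + cosz (N - Z.of_nat (S a) + k) x + cosz (N - Z.of_nat (S a) - k) x))).
- rewrite !avg_plus, avg_rsum. f_equal. apply rsum_ext. intros. rewrite !avg_plus. reflexivity.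
- intros x. unfold dirichlet.
  replace (2 * cosz N x * (1 + 2 * rsum s (fun a => cosz (Z.of_nat (S a)) x)) * cosz k x) with
    (2 * (cosz N x * cosz k x)
     + rsum s (fun a => cosz (Z.of_nat (S a)) x) * (4 * cosz N x * cosz k x))
    by ring.
  rewrite rsum_mulr, cosz_mul. f_equal; [field|].
  apply rsum_ext. intros. rewrite <- cosz_mul3. ring.
Qed.

Lemma avg_modulated_dirichlet_nonneg N s k :
  0 <= avg M (fun x => 2 * cosz N x * dirichlet s x * cosz k x).
Proof.
rewrite avg_modulated_dirichlet.
assert (0 <= rsum s (fun a =>
  avg M (cosz (N + Z.of_nat (S a) + k)) + avg M (cosz (N + Z.of_nat (S a) - k))
  + avg M (cosz (N - Z.of_nat (S a) + k)) + avg M (cosz (N - Z.of_nat (S a) - k)))).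
{ apply rsum_nonneg. intros a _.
  pose proof (avg_cosz_nonneg (N + Z.of_nat (S a) + k)).
  pose proof (avg_cosz_nonneg (N + Z.of_nat (S a) - k)).
  pose proof (avg_cosz_nonneg (N - Z.of_nat (S a) + k)).
  pose proof (avg_cosz_nonneg (N - Z.of_nat (S a) - k)).
  lra. }
pose proof (avg_cosz_nonneg (N + k)). pose proof (avg_cosz_nonneg (N - k)). lra.
Qed.

Lemma avg_modulated_dirichlet_low N s n k :
  (n + s < N)%nat -> (N + s + n < M)%nat -> (k <= n)%nat ->
  avg M (fun x => 2 * cosz (Z.of_nat N) x * dirichlet s x * cosz (Z.of_nat k) x) = 0.
Proof.
intros H1 H2 H3. rewrite avg_modulated_dirichlet, rsum_zero.
- rewrite !avg_cosz_small by (exact M_pos || lia). ring.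
- intros a Ha. rewrite !avg_cosz_small by (exact M_pos || lia). ring.
Qed.

Lemma avg_modulated_dirichlet_ge1 N s k :
  (k <= N + s)%nat -> (N <= k + s)%nat ->
  1 <= avg M (fun x => 2 * cosz (Z.of_nat N) x * dirichlet s x * cosz (Z.of_nat k) x).
Proof.
intros H1 H2. rewrite avg_modulated_dirichlet.
set (F := fun a => avg M (cosz (Z.of_nat N + Z.of_nat (S a) + Z.of_nat k))
  + avg M (cosz (Z.of_nat N + Z.of_nat (S a) - Z.of_nat k))
  + avg M (cosz (Z.of_nat N - Z.of_nat (S a) + Z.of_nat k))
  + avg M (cosz (Z.of_nat N - Z.of_nat (S a) - Z.of_nat k))).
assert (HF : forall a, 0 <= F a).
{ intros a. unfold F.
  pose proof (avg_cosz_nonneg (Z.of_nat N + Z.of_nat (S a) + Z.of_nat k)).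
  pose proof (avg_cosz_nonneg (Z.of_nat N + Z.of_nat (S a) - Z.of_nat k)).
  pose proof (avg_cosz_nonneg (Z.of_nat N - Z.of_nat (S a) + Z.of_nat k)).
  pose proof (avg_cosz_nonneg (Z.of_nat N - Z.of_nat (S a) - Z.of_nat k)). lra. }
(* the frequency [0] occurs among the four terms of [F a] for [a + 1 = |N - k|] *)
assert (Hzero : forall a, (S a = N - k \/ S a = k - N)%nat -> 1 <= F a).
{ intros a Ha. unfold F.
  pose proof (avg_cosz_nonneg (Z.of_nat N + Z.of_nat (S a) + Z.of_nat k)).
  pose proof (avg_cosz_nonneg (Z.of_nat N + Z.of_nat (S a) - Z.of_nat k)).
  pose proof (avg_cosz_nonneg (Z.of_nat N - Z.of_nat (S a) + Z.of_nat k)).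
  pose proof (avg_cosz_nonneg (Z.of_nat N - Z.of_nat (S a) - Z.of_nat k)).
  destruct Ha as [Ha|Ha].
  - replace (Z.of_nat N - Z.of_nat (S a) - Z.of_nat k)%Z with 0%Z by lia.
    rewrite avg_cosz0 by exact M_pos. lra.
  - replace (Z.of_nat N + Z.of_nat (S a) - Z.of_nat k)%Z with 0%Z by lia.
    rewrite avg_cosz0 by exact M_pos. lra. }
pose proof (avg_cosz_nonneg (Z.of_nat N + Z.of_nat k)).
pose proof (avg_cosz_nonneg (Z.of_nat N - Z.of_nat k)).
assert (0 <= rsum s F) by (apply rsum_nonneg; auto).
destruct (Nat.eq_dec k N) as [->|Hne].
- replace (Z.of_nat N - Z.of_nat N)%Z with 0%Z by lia.
  rewrite avg_cosz0 by exact M_pos. fold F. lra.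
- assert (Hterm : 1 <= F (Nat.max (N - k) (k - N) - 1)%nat) by (apply Hzero; lia).
  assert (F (Nat.max (N - k) (k - N) - 1)%nat <= rsum s F) by (apply rsum_term_le; auto; lia).
  fold F. lra.
Qed.

End Kernel_averages.

Definition modulated_fejer (N r : nat) (x : R) := 2 * cosz (Z.of_nat N) x * fejer r x.

Definition vallee_poussin (n : nat) (x : R) := / INR n * rsum n (fun s => dirichlet (n + s) x).

Lemma cos_poly_modulated_fejer N r : cos_poly (modulated_fejer N r).
Proof.
apply (cos_poly_ext (fun x => 2 * (fejer r x * cosz (Z.of_nat N) x))).
- intros x. unfold modulated_fejer. ring.
- apply cos_poly_scal, cos_poly_mul_cosz, cos_poly_fejer.
Qed.

Lemma cos_poly_vallee_poussin n : cos_poly (vallee_poussin n).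
Proof. apply cos_poly_scal, cos_poly_rsum. intros; apply cos_poly_dirichlet. Qed.

Lemma Rabs_vallee_poussin_le n x : (0 < n)%nat ->
  Rabs (vallee_poussin n x) <= / INR n * (fejer (2 * n) x + fejer n x).
Proof.
intros Hn. assert (0 < / INR n) by (apply Rinv_0_lt_compat, lt_0_INR, Hn).
unfold vallee_poussin.
replace (rsum n (fun s => dirichlet (n + s) x)) with (fejer (2 * n) x - fejer n x)
  by (unfold fejer; replace (2 * n)%nat with (n + n)%nat by lia; rewrite rsum_split; ring).
rewrite Rabs_mult, Rabs_right by lra. apply Rmult_le_compat_l; [lra|].
pose proof (fejer_nonneg (2 * n) x). pose proof (fejer_nonneg n x). apply Rabs_le. lra.
Qed.

Section Test_kernel_weights.

Variable M : nat.
Hypothesis M_pos : (0 < M)%nat.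

Lemma avg_modulated_fejer_mul_cosz N r k :
  avg M (fun x => modulated_fejer N r x * cosz (Z.of_nat k) x)
  = rsum r (fun s =>
      avg M (fun x => 2 * cosz (Z.of_nat N) x * dirichlet s x * cosz (Z.of_nat k) x)).
Proof.
rewrite <- avg_rsum. apply avg_ext. intros x. unfold modulated_fejer, fejer.
transitivity (rsum r (fun s => dirichlet s x)
              * (2 * cosz (Z.of_nat N) x * cosz (Z.of_nat k) x)); [ring|].
rewrite rsum_mulr. apply rsum_ext. intros; ring.
Qed.

Lemma avg_modulated_fejer_mul_cosz_nonneg N r k :
  0 <= avg M (fun x => modulated_fejer N r x * cosz (Z.of_nat k) x).
Proof.
rewrite avg_modulated_fejer_mul_cosz. apply rsum_nonneg. intros.
apply avg_modulated_dirichlet_nonneg, M_pos.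
Qed.

Lemma avg_modulated_fejer_mul_cosz_low N t n k :
  (n + 2 * t < N)%nat -> (N + 2 * t + n < M)%nat -> (k <= n)%nat ->
  avg M (fun x => modulated_fejer N (2 * t + 1) x * cosz (Z.of_nat k) x) = 0.
Proof.
intros H1 H2 H3. rewrite avg_modulated_fejer_mul_cosz. apply rsum_zero. intros s Hs.
apply (avg_modulated_dirichlet_low M M_pos N s n k); lia.
Qed.

Lemma avg_modulated_fejer_mul_cosz_center N t j : (t <= N)%nat -> (j <= 2 * t)%nat ->
  INR t + 1 <= avg M (fun x => modulated_fejer N (2 * t + 1) x * cosz (Z.of_nat (N - t + j)) x).
Proof.
intros HtN Hj. rewrite avg_modulated_fejer_mul_cosz.
replace (2 * t + 1)%nat with (t + (t + 1))%nat by lia. rewrite rsum_split.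
assert (0 <= rsum t (fun s => avg M (fun x =>
  2 * cosz (Z.of_nat N) x * dirichlet s x * cosz (Z.of_nat (N - t + j)) x))).
{ apply rsum_nonneg. intros. apply avg_modulated_dirichlet_nonneg, M_pos. }
(* the last [t + 1] Dirichlet kernels [D_s], [s >= t], all reach the frequency [N - t + j] *)
assert (rsum (t + 1) (fun _ => 1) <= rsum (t + 1) (fun i => avg M (fun x =>
  2 * cosz (Z.of_nat N) x * dirichlet (t + i) x * cosz (Z.of_nat (N - t + j)) x))).
{ apply rsum_le. intros i Hi. apply avg_modulated_dirichlet_ge1; [exact M_pos|lia|lia]. }
rewrite rsum_const, plus_INR in *. simpl INR in *. lra.
Qed.

Lemma avg_vallee_poussin_mul_cosz n k :
  avg M (fun x => vallee_poussin n x * cosz (Z.of_nat k) x)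
  = / INR n * rsum n (fun s => avg M (fun x => dirichlet (n + s) x * cosz (Z.of_nat k) x)).
Proof.
rewrite <- avg_rsum, <- avg_scal. apply avg_ext. intros x.
unfold vallee_poussin. rewrite Rmult_assoc, rsum_mulr. reflexivity.
Qed.

Lemma avg_vallee_poussin_mul_cosz_bounds n k : (0 < n)%nat ->
  0 <= avg M (fun x => vallee_poussin n x * cosz (Z.of_nat k) x) <= 4 * INR n.
Proof.
intros Hn. assert (HnR : 0 < INR n) by (apply lt_0_INR, Hn).
rewrite avg_vallee_poussin_mul_cosz.
assert (Hb : forall s, (s < n)%nat ->
  0 <= avg M (fun x => dirichlet (n + s) x * cosz (Z.of_nat k) x) <= 4 * INR n).
{ intros s Hs. pose proof (avg_dirichlet_mul_cosz_bounds M M_pos (n + s) (Z.of_nat k)).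
  assert (INR s + 1 <= INR n) by (rewrite <- S_INR; apply le_INR; lia).
  rewrite plus_INR in *. lra. }
assert (0 <= rsum n (fun s => avg M (fun x => dirichlet (n + s) x * cosz (Z.of_nat k) x)))
  by (apply rsum_nonneg; intros; apply Hb; auto).
assert (rsum n (fun s => avg M (fun x => dirichlet (n + s) x * cosz (Z.of_nat k) x))
        <= rsum n (fun _ => 4 * INR n)) by (apply rsum_le; intros; apply Hb; auto).
rewrite rsum_const in *. split.
- apply Rmult_le_pos; [left; apply Rinv_0_lt_compat|]; lra.
- apply (Rmult_le_reg_l (INR n)); [lra|]. rewrite <- Rmult_assoc, Rinv_r; lra.
Qed.

(* Below [M - 2n] there is no aliasing: the weights are [1] up to [n], in [[0, 1]] up to [2n],
   then [0]. *)
Section Exact_weights.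

Variables n k : nat.
Hypothesis n_pos : (0 < n)%nat.
Hypothesis k_small : (k + 2 * n < M)%nat.

Let HnR : 0 < INR n.
Proof. apply lt_0_INR, n_pos. Qed.

Lemma avg_vallee_poussin_mul_cosz_low : (k <= n)%nat ->
  avg M (fun x => vallee_poussin n x * cosz (Z.of_nat k) x) = 1.
Proof.
intros Hk. rewrite avg_vallee_poussin_mul_cosz, (rsum_ext _ _ (fun _ => 1)), rsum_const
  by (intros s Hs; rewrite avg_dirichlet_mul_cosz_exact by (exact M_pos || lia);
      destruct (Nat.eqb_spec k 0), (Nat.leb_spec 1 k), (Nat.leb_spec k (n + s)); simpl; lra || lia).
field. lra.
Qed.

Lemma avg_vallee_poussin_mul_cosz_le1 : (1 <= k)%nat ->
  avg M (fun x => vallee_poussin n x * cosz (Z.of_nat k) x) <= 1.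
Proof.
intros Hk. rewrite avg_vallee_poussin_mul_cosz.
assert (rsum n (fun s => avg M (fun x => dirichlet (n + s) x * cosz (Z.of_nat k) x))
        <= rsum n (fun _ => 1)).
{ apply rsum_le. intros s Hs. rewrite avg_dirichlet_mul_cosz_exact by (exact M_pos || lia).
  destruct (Nat.eqb_spec k 0), (Nat.leb_spec 1 k), (Nat.leb_spec k (n + s)); simpl; lra || lia. }
rewrite rsum_const in H.
apply (Rmult_le_reg_l (INR n)); [lra|]. rewrite <- Rmult_assoc, Rinv_r; lra.
Qed.

Lemma avg_vallee_poussin_mul_cosz_high : (2 * n <= k)%nat ->
  avg M (fun x => vallee_poussin n x * cosz (Z.of_nat k) x) = 0.
Proof.
intros Hk. rewrite avg_vallee_poussin_mul_cosz, rsum_zero by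
  (intros s Hs; rewrite avg_dirichlet_mul_cosz_exact by (exact M_pos || lia);
   destruct (Nat.eqb_spec k 0), (Nat.leb_spec 1 k), (Nat.leb_spec k (n + s)); simpl; lra || lia).
ring.
Qed.

End Exact_weights.

Lemma avg_vallee_poussin_majorant n : (0 < n)%nat -> (2 * n <= M)%nat ->
  avg M (fun x => / INR n * (fejer (2 * n) x + fejer n x)) = 3.
Proof.
intros Hn HM. rewrite avg_scal, avg_plus, !avg_fejer by (exact M_pos || lia).
rewrite mult_INR. simpl INR. field. apply not_0_INR. lia.
Qed.

End Test_kernel_weights.

(** * Consequences of the NBVS condition *)

Lemma inM_real_nonneg theta0 r : 0 <= theta0 < PI / 2 -> inM theta0 (RtoC r) -> 0 <= r.
Proof.
intros Htheta [H|[rho [th [Hrho [Hth H]]]]]; apply (f_equal fst) in H; simpl in H.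
- lra.
- rewrite H. apply Rmult_le_pos; [lra|]. apply Rabs_le_between in Hth.
  left. apply cos_gt_0; lra.
Qed.

Lemma NBVS_real (c : nat -> R) : NBVS (fun k => RtoC (c k)) ->
  (forall k, (1 <= k)%nat -> 0 <= c k) /\
  exists K, 0 < K /\ forall m, (1 <= m)%nat ->
    sum_n_m (fun k => Rabs (c k - c (S k))) m (2 * m) <= K * (c m + c (2 * m)%nat).
Proof.
intros [[theta0 [Htheta HM]] [K [HK Hvar]]].
assert (Hc : forall k, (1 <= k)%nat -> 0 <= c k)
  by (intros k Hk; apply (inM_real_nonneg theta0); auto).
split; [exact Hc|]. exists K. split; [exact HK|]. intros m Hm. specialize (Hvar m Hm).
rewrite (sum_n_m_ext _ (fun k => Rabs (c k - c (S k)))) in Hvar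
  by (intros; rewrite <- RtoC_minus; apply Cmod_R).
rewrite !Cmod_R, !Rabs_right in Hvar by (apply Rle_ge, Hc; lia). exact Hvar.
Qed.

Lemma Rabs_sub_le_variation (c : nat -> R) i len :
  Rabs (c (i + len)%nat - c i) <= rsum len (fun j => Rabs (c (i + j)%nat - c (S (i + j)))).
Proof.
induction len as [|len IH]; cbn [rsum].
- rewrite Nat.add_0_r, Rminus_diag, Rabs_R0. lra.
- replace (c (i + S len)%nat - c i)
    with ((c (i + len)%nat - c i) - (c (i + len)%nat - c (S (i + len))))
    by (rewrite Nat.add_succ_r; ring).
  eapply Rle_trans; [apply Rabs_triang|]. rewrite Rabs_Ropp. lra.
Qed.

(* Compare [c m] with both ends of the dyadic block [[i, 2i+1]] containing it. *)
Lemma nbv_two_sided (c : nat -> R) K i m :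
  (i <= m <= 2 * i)%nat ->
  sum_n_m (fun k => Rabs (c k - c (S k))) i (2 * i) <= K * (c i + c (2 * i)%nat) ->
  2 * c m <= (K + 1) * c i + K * c (2 * i)%nat + c (2 * i + 1)%nat.
Proof.
intros Hm Hvar. rewrite sum_n_m_rsum in Hvar.
replace (S (2 * i) - i)%nat with ((m - i) + (2 * i + 1 - m))%nat in Hvar by lia.
rewrite rsum_split in Hvar.
pose proof (Rabs_sub_le_variation c i (m - i)) as Hleft.
pose proof (Rabs_sub_le_variation c m (2 * i + 1 - m)) as Hright.
replace (i + (m - i))%nat with m in Hleft by lia.
replace (m + (2 * i + 1 - m))%nat with (2 * i + 1)%nat in Hright by lia.
rewrite (rsum_ext _ (fun j => Rabs (c (m + j)%nat - c (S (m + j))))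
  (fun j => Rabs (c (i + (m - i + j))%nat - c (S (i + (m - i + j)))))) in Hright
  by (intros j _; replace (i + (m - i + j))%nat with (m + j)%nat by lia; reflexivity).
pose proof (Rle_abs (c m - c i)). pose proof (Rle_abs (c m - c (2 * i + 1)%nat)).
rewrite Rabs_minus_sym in Hright. lra.
Qed.

Lemma exists_third k : (1 <= k)%nat -> exists t, (3 * t + 1 <= k <= 3 * t + 3)%nat.
Proof.
intros Hk. exists ((k - 1) / 3)%nat.
pose proof (Nat.div_mod_eq (k - 1) 3). pose proof (Nat.mod_upper_bound (k - 1) 3). lia.
Qed.

Lemma fold_right_Rmax_le (l : list R) x0 B :
  x0 <= B -> (forall y, In y l -> y <= B) -> fold_right Rmax x0 l <= B.
Proof.
induction l as [|y l IH]; simpl; intros H0 Hl; auto.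
apply Rmax_lub; [apply Hl; auto|apply IH; auto].
Qed.

Lemma fold_right_Rmax_ge (l : list R) x0 : x0 <= fold_right Rmax x0 l.
Proof.
induction l as [|y l IH]; simpl; [lra|]. eapply Rle_trans; [apply IH|apply Rmax_r].
Qed.

(** * Coefficient bounds from a good trigonometric approximation *)

Lemma is_series_ge_partial u l J : is_series u l -> (forall k, 0 <= u k) -> sum_n u J <= l.
Proof.
intros H Hu. apply (is_lim_seq_incr_compare (sum_n u) l H). intros k.
rewrite !sum_n_rsum. cbn [rsum]. pose proof (Hu (S k)). lra.
Qed.

Lemma is_series_ge_eventually u l L X :
  is_series u l -> (forall q, (L <= q)%nat -> X <= sum_n u q) -> X <= l.
Proof.
intros H HX. apply (is_lim_seq_le_loc (fun _ => X) (sum_n u) X l);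
  [exists L; auto|apply is_lim_seq_const|exact H].
Qed.

Lemma is_series_le_eventually u l L X :
  is_series u l -> (forall q, (L <= q)%nat -> sum_n u q <= X) -> l <= X.
Proof.
intros H HX. apply (is_lim_seq_le_loc (sum_n u) (fun _ => X) l X);
  [exists L; auto|exact H|apply is_lim_seq_const].
Qed.

Lemma weighted_partial_sum_ge (c w : nat -> R) m J L q B eps :
  (m + J <= L <= q)%nat ->
  (forall k, (k < L)%nat -> 0 <= c k * (1 - w k)) ->
  (forall k, (m <= k < L)%nat -> w k = 0) ->
  (forall k, (L <= k)%nat -> 0 <= c k /\ w k <= B) ->
  B * sum_n_m c L q <= eps ->
  rsum J (fun j => c (m + j)%nat) - eps <= sum_n (fun k => c k * (1 - w k)) q.
Proof.
intros HL Hterm Hzero Htail Heps.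
rewrite sum_n_rsum. replace (S q) with (L + (S q - L))%nat by lia. rewrite rsum_split.
assert (Hhead : rsum J (fun j => c (m + j)%nat) <= rsum L (fun k => c k * (1 - w k))).
{ replace L with (m + (J + (L - m - J)))%nat by lia.
  rewrite rsum_split, (rsum_split J).
  assert (0 <= rsum m (fun k => c k * (1 - w k))) by (apply rsum_nonneg; intros; apply Hterm; lia).
  assert (0 <= rsum (L - m - J) (fun i => c (m + (J + i))%nat * (1 - w (m + (J + i))%nat)))
    by (apply rsum_nonneg; intros; apply Hterm; lia).
  rewrite (rsum_ext J (fun j => c (m + j)%nat) (fun i => c (m + i)%nat * (1 - w (m + i)%nat)))
    by (intros i Hi; rewrite Hzero by lia; ring).
  lra. }
assert (rsum (S q - L) (fun i => - B * c (L + i)%nat)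
        <= rsum (S q - L) (fun i => c (L + i)%nat * (1 - w (L + i)%nat))).
{ apply rsum_le. intros i _. destruct (Htail (L + i)%nat) as [Hc Hw]; [lia|]. nra. }
rewrite rsum_scal, <- sum_n_m_rsum in H. lra.
Qed.

Section Good_approximation.

Variables (c : nat -> R) (f T : R -> R) (a b : nat -> R) (n : nat) (e : R).
Hypothesis c_nonneg : forall k, (1 <= k)%nat -> 0 <= c k.
Hypothesis f_series : forall x, is_series (fun k => c k * cos (INR k * x)) (f x).
Hypothesis T_trig :
  forall x, T x = a O + sum_n_m (fun k => a k * cos (INR k * x) + b k * sin (INR k * x)) 1 n.
Hypothesis T_approx : forall x, Rabs (f x - T x) <= e.

Lemma approx_error_nonneg : 0 <= e.
Proof. pose proof (T_approx 0). pose proof (Rabs_pos (f 0 - T 0)). lra. Qed.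

Lemma f_series_at_0 : is_series c (f 0).
Proof.
apply (is_series_ext (fun k => c k * cos (INR k * 0))); [|apply f_series].
intros k. rewrite Rmult_0_r, cos_0. apply Rmult_1_r.
Qed.

Lemma avg_mul_approx_le M h B : (0 < M)%nat -> cos_poly h ->
  (forall k, (k <= n)%nat -> avg M (fun x => h x * cosz (Z.of_nat k) x) = 0) ->
  (forall x, Rabs (h x) <= B x) ->
  avg M (fun x => h x * f x) <= e * avg M B.
Proof.
intros HM Hh Hlow HB.
assert (avg_hT : avg M (fun x => h x * T x) = 0).
{ rewrite (avg_cos_poly_mul_trig M HM h Hh n a b T T_trig).
  rewrite rsum_zero by (intros i Hi; rewrite Hlow by lia; ring).
  replace (avg M h) with (avg M (fun x => h x * cosz (Z.of_nat 0) x))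
    by (apply avg_ext; intros; rewrite cosz_0; ring).
  rewrite Hlow by lia. ring. }
replace (avg M (fun x => h x * f x))
  with (avg M (fun x => h x * (f x - T x)) + avg M (fun x => h x * T x))
  by (rewrite <- avg_plus; apply avg_ext; intros; ring).
rewrite avg_hT, Rplus_0_r.
eapply Rle_trans; [apply Rle_abs|]. apply Rabs_avg_mul_le; assumption.
Qed.

Lemma avg_vallee_poussin_mul_trig M : (0 < n)%nat -> (3 * n < M)%nat ->
  avg M (fun x => vallee_poussin n x * T x) = T 0.
Proof.
intros Hn HM.
assert (w_low : forall k, (k <= n)%nat ->
  avg M (fun x => vallee_poussin n x * cosz (Z.of_nat k) x) = 1)
  by (intros; apply avg_vallee_poussin_mul_cosz_low; lia).
rewrite (avg_cos_poly_mul_trig M ltac:(lia) _ (cos_poly_vallee_poussin n) n a b T T_trig).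
replace (avg M (vallee_poussin n)) with (avg M (fun x => vallee_poussin n x * cosz (Z.of_nat 0) x))
  by (apply avg_ext; intros; rewrite cosz_0; ring).
rewrite T_trig, sum_n_m_rsum, w_low by lia. replace (S n - 1)%nat with n by lia.
rewrite Rmult_1_r. f_equal. apply rsum_ext. intros i Hi.
rewrite w_low by lia. simpl (1 + i)%nat. rewrite Rmult_0_r, cos_0, sin_0. ring.
Qed.

Lemma vallee_poussin_defect_le M : (0 < n)%nat -> (3 * n < M)%nat ->
  f 0 - avg M (fun x => vallee_poussin n x * f x) <= 4 * e.
Proof.
intros Hn HM.
replace (f 0 - avg M (fun x => vallee_poussin n x * f x))
  with ((f 0 - T 0) - avg M (fun x => vallee_poussin n x * (f x - T x))).
2: { rewrite <- (avg_vallee_poussin_mul_trig M Hn HM), <- Rminus_plus_distr, <- avg_plus.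
     f_equal. apply avg_ext. intros; ring. }
assert (Rabs (avg M (fun x => vallee_poussin n x * (f x - T x))) <= e * 3).
{ rewrite <- (avg_vallee_poussin_majorant M ltac:(lia) n) by lia.
  apply Rabs_avg_mul_le; [lia|exact T_approx|]. intros x. apply Rabs_vallee_poussin_le, Hn. }
pose proof (T_approx 0). pose proof (Rle_abs (f 0 - T 0)).
pose proof (Rle_abs (- avg M (fun x => vallee_poussin n x * (f x - T x)))). rewrite Rabs_Ropp in *.
lra.
Qed.

(* Pair [f] with [2 cos (N x)] times the Fejér kernel of order [2t]; it annihilates [T]. *)
Lemma block_sum_le t N : (n + 2 * t < N)%nat ->
  rsum (2 * t + 1) (fun j => c (N - t + j)%nat) <= 4 * e.
Proof.
intros HN. set (M := (N + 2 * t + n + 1)%nat). assert (HM : (0 < M)%nat) by lia.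
set (h := modulated_fejer N (2 * t + 1)).
set (w := fun k : nat => avg M (fun x => h x * cosz (Z.of_nat k) x)).
assert (w_nonneg : forall k, 0 <= w k) by (intros; apply avg_modulated_fejer_mul_cosz_nonneg, HM).
assert (w_low : forall k, (k <= n)%nat -> w k = 0)
  by (intros; apply (avg_modulated_fejer_mul_cosz_low M HM N t n k); unfold M; lia).
assert (Hupper : avg M (fun x => h x * f x) <= e * (2 * (2 * INR t + 1))).
{ replace (2 * (2 * INR t + 1)) with (avg M (fun x => 2 * fejer (2 * t + 1) x)).
  - apply avg_mul_approx_le; [exact HM|apply cos_poly_modulated_fejer|exact w_low|].
    intros x. unfold h, modulated_fejer.
    rewrite !Rabs_mult, Rabs_right, (Rabs_right (fejer _ x)) by (apply Rle_ge, fejer_nonneg || lra).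
    pose proof (Rabs_cosz_le (Z.of_nat N) x). pose proof (fejer_nonneg (2 * t + 1) x). nra.
  - rewrite avg_scal, avg_fejer by (exact HM || unfold M; lia).
    rewrite plus_INR, mult_INR. simpl INR. ring. }
assert (Hpart : sum_n (fun k => c k * w k) (N + t) <= avg M (fun x => h x * f x)).
{ apply is_series_ge_partial; [apply avg_mul_series; assumption|]. intros [|k].
  - rewrite w_low by lia. lra.
  - apply Rmult_le_pos; [apply c_nonneg; lia|apply w_nonneg]. }
rewrite sum_n_rsum in Hpart. replace (S (N + t)) with (N - t + (2 * t + 1))%nat in Hpart by lia.
rewrite rsum_split in Hpart.
assert (0 <= rsum (N - t) (fun k => c k * w k)).
{ apply rsum_nonneg. intros [|k] _.
  - rewrite w_low by lia. lra.
  - apply Rmult_le_pos; [apply c_nonneg; lia|apply w_nonneg]. }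
assert (Hblock : rsum (2 * t + 1) (fun j => c (N - t + j)%nat) * (INR t + 1)
                 <= rsum (2 * t + 1) (fun j => c (N - t + j)%nat * w (N - t + j)%nat)).
{ rewrite rsum_mulr. apply rsum_le. intros j Hj.
  apply Rmult_le_compat_l; [apply c_nonneg; lia|].
  apply avg_modulated_fejer_mul_cosz_center; [exact HM|lia|lia]. }
pose proof (pos_INR t). pose proof approx_error_nonneg.
apply (Rmult_le_reg_r (INR t + 1)); [lra|]. nra.
Qed.

(* Pair [f] at [0] with the de la Vallée-Poussin kernel; the averaging grid is taken so fine
   that all aliased frequencies lie in a tail of [sum c_k] of size [eps]. *)
Lemma tail_sum_le J : (1 <= n)%nat -> rsum J (fun j => c (2 * n + j)%nat) <= 4 * e.
Proof.
intros Hn. assert (HnR : 0 < INR n) by (apply lt_0_INR; lia).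
apply le_epsilon. intros eps Heps.
destruct (Cauchy_ex_series c (ex_intro _ _ f_series_at_0) (mkposreal (eps / (4 * INR n))
  ltac:(apply Rdiv_lt_0_compat; lra))) as [N0 HN0]. simpl in HN0.
set (L := (N0 + 2 * n + J + 1)%nat). set (M := (L + 2 * n)%nat). assert (HM : (0 < M)%nat) by lia.
set (w := fun k : nat => avg M (fun x => vallee_poussin n x * cosz (Z.of_nat k) x)).
assert (w_bounds : forall k, 0 <= w k <= 4 * INR n)
  by (intros; apply avg_vallee_poussin_mul_cosz_bounds; (exact HM || lia)).
assert (w_low : forall k, (k <= n)%nat -> w k = 1)
  by (intros; apply avg_vallee_poussin_mul_cosz_low; (exact HM || unfold M, L; lia)).
assert (w_le1 : forall k, (1 <= k)%nat -> (k < L)%nat -> w k <= 1)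
  by (intros; apply avg_vallee_poussin_mul_cosz_le1; (exact HM || unfold M, L; lia)).
assert (w_high : forall k, (2 * n <= k)%nat -> (k < L)%nat -> w k = 0)
  by (intros; apply avg_vallee_poussin_mul_cosz_high; (exact HM || unfold M, L; lia)).
assert (Hseries : is_series (fun k => c k * (1 - w k))
                            (f 0 - avg M (fun x => vallee_poussin n x * f x))).
{ apply (is_series_ext (fun k => c k + - (c k * w k))); [intros; simpl; ring|].
  apply (is_series_minus c _ (f 0)); [exact f_series_at_0|apply avg_mul_series; assumption]. }
assert (Hupper := vallee_poussin_defect_le M ltac:(lia) ltac:(unfold M, L; lia)).
enough (rsum J (fun j => c (2 * n + j)%nat) - eps
        <= f 0 - avg M (fun x => vallee_poussin n x * f x))
  by lra.
apply (is_series_ge_eventually _ _ L _ Hseries). intros q Hq.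
apply (weighted_partial_sum_ge c w (2 * n) J L q (4 * INR n)).
- unfold L. lia.
- intros [|k] Hk.
  + rewrite w_low by lia. lra.
  + apply Rmult_le_pos; [apply c_nonneg; lia|].
    assert (w (S k) <= 1) by (apply w_le1; lia). lra.
- intros k Hk. apply w_high; lia.
- intros k Hk. split; [apply c_nonneg; unfold L in Hk; lia|apply w_bounds].
- assert (Rabs (sum_n_m c L q) < eps / (4 * INR n)) by (apply HN0; unfold L; lia).
  pose proof (Rle_abs (sum_n_m c L q)).
  replace eps with (4 * INR n * (eps / (4 * INR n))) by (field; lra).
  apply Rmult_le_compat_l; lra.
Qed.

Variable K : R.
Hypothesis K_pos : 0 < K.
Hypothesis c_nbv : forall m, (1 <= m)%nat ->
  sum_n_m (fun k => Rabs (c k - c (S k))) m (2 * m) <= K * (c m + c (2 * m)%nat).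

(* Average [nbv_two_sided] over a block of length [2t + 1 ~ k] centred below [n + k];
   the left ends form a block of [block_sum_le], the right ends lie in the tail beyond [2n]. *)
Lemma weighted_coef_le k : (1 <= k <= n)%nat -> INR k * c (n + k)%nat <= 12 * (K + 1) * e.
Proof.
intros Hk. destruct (exists_third k) as [t Ht]; [lia|].
set (N := (n + k - t)%nat). set (m := (n + k)%nat).
assert (Hblock := block_sum_le t N ltac:(unfold N; lia)).
assert (Hpairs : rsum (2 * (2 * t + 1)) (fun l => c (2 * (N - t) + l)%nat) <= 4 * e).
{ set (d := (2 * (N - t) - 2 * n)%nat).
  assert (Htail := tail_sum_le (d + 2 * (2 * t + 1)) ltac:(lia)). rewrite rsum_split in Htail.
  assert (0 <= rsum d (fun j => c (2 * n + j)%nat))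
    by (apply rsum_nonneg; intros; apply c_nonneg; lia).
  rewrite (rsum_ext _ (fun l => c (2 * (N - t) + l)%nat) (fun i => c (2 * n + (d + i))%nat))
    by (intros; f_equal; unfold d, N; lia).
  lra. }
assert (Hsum : rsum (2 * t + 1) (fun _ => 2 * c m)
  <= rsum (2 * t + 1) (fun j => (K + 1) * c (N - t + j)%nat
       + (K + 1) * (c (2 * (N - t + j))%nat + c (2 * (N - t + j) + 1)%nat))).
{ apply rsum_le. intros j Hj.
  assert (2 * c m <= (K + 1) * c (N - t + j)%nat + K * c (2 * (N - t + j))%nat
                     + c (2 * (N - t + j) + 1)%nat)
    by (apply nbv_two_sided; [unfold N, m; lia|apply c_nbv; unfold N; lia]).
  assert (0 <= c (2 * (N - t + j))%nat) by (apply c_nonneg; unfold N; lia).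
  assert (0 <= K * c (2 * (N - t + j) + 1)%nat) by (apply Rmult_le_pos; [lra|apply c_nonneg; lia]).
  lra. }
rewrite rsum_const, rsum_plus, !rsum_scal, (rsum_pairs c (N - t)) in Hsum.
rewrite plus_INR, mult_INR in Hsum. simpl INR in Hsum.
assert (0 <= c m) by (apply c_nonneg; unfold m; lia).
assert (INR k <= 3 * (2 * INR t + 1)).
{ replace (3 * (2 * INR t + 1)) with (INR (3 * (2 * t + 1)))
    by (rewrite mult_INR, plus_INR, mult_INR; simpl; ring).
  apply le_INR. lia. }
pose proof (pos_INR k). pose proof (pos_INR t). pose proof approx_error_nonneg.
fold m. nra.
Qed.

Lemma maxkc_bounds : (1 <= n)%nat -> 0 <= maxkc c n <= 12 * (K + 1) * e.
Proof.
intros Hn. unfold maxkc. split.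
- eapply Rle_trans; [|apply fold_right_Rmax_ge]. apply c_nonneg. lia.
- apply fold_right_Rmax_le.
  + replace (c (S n)) with (INR 1 * c (n + 1)%nat)
      by (simpl; replace (n + 1)%nat with (S n) by lia; ring).
    apply weighted_coef_le. lia.
  + intros y Hy. apply in_map_iff in Hy as [k [<- Hk]]. apply in_seq in Hk.
    apply weighted_coef_le. lia.
Qed.

Variable C : R.
Hypothesis middle_sum_le : Rabs (sum_n_m c (S n) (2 * n)) <= C * Rabs (maxkc c n).

(* Since [c_k >= 0], [|f - S_n f|] is at most [sum_{k > n} c_k]: the middle block
   [n < k <= 2n] is controlled by the hypothesis and the rest by [tail_sum_le]. *)
Lemma partial_sum_error_le x : (1 <= n)%nat ->
  Rabs (f x - Sn c n x) <= (Rabs C * (12 * (K + 1)) + 4) * e.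
Proof.
intros Hn. pose proof approx_error_nonneg as He.
assert (Hmiddle : Rabs (sum_n_m c (S n) (2 * n)) <= Rabs C * (12 * (K + 1) * e)).
{ destruct (maxkc_bounds Hn) as [Hmax0 Hmax1].
  eapply Rle_trans; [apply middle_sum_le|]. rewrite (Rabs_right (maxkc c n)) by lra.
  eapply Rle_trans; [apply Rmult_le_compat_r; [lra|apply Rle_abs]|].
  apply Rmult_le_compat_l; [apply Rabs_pos|lra]. }
set (B := (Rabs C * (12 * (K + 1)) + 4) * e).
set (u := fun k => c k * cos (INR k * x)).
assert (Hpartial : forall q, (2 * n <= q)%nat -> Rabs (sum_n u q - Sn c n x) <= B).
{ intros q Hq. unfold Sn. fold u.
  replace (sum_n u q - sum_n u n) with (sum_n_m u (S n) q)
    by (apply (sum_n_m_sum_n (G := R_AbelianGroup)); lia).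
  rewrite sum_n_m_rsum. replace (S q - S n)%nat with (n + (q - 2 * n))%nat by lia.
  eapply Rle_trans; [apply rsum_abs|].
  eapply Rle_trans.
  { apply (rsum_le _ _ (fun i => c (S n + i)%nat)). intros i _. unfold u.
    rewrite Rabs_mult, Rabs_right by (apply Rle_ge, c_nonneg; lia).
    pose proof (c_nonneg (S n + i)%nat ltac:(lia)).
    assert (Rabs (cos (INR (S n + i) * x)) <= 1) by apply Rabs_le, COS_bound. nra. }
  rewrite rsum_split.
  assert (Hhead : rsum n (fun i => c (S n + i)%nat) = sum_n_m c (S n) (2 * n))
    by (rewrite sum_n_m_rsum; replace (S (2 * n) - S n)%nat with n by lia; reflexivity).
  assert (Hrest : rsum (q - 2 * n) (fun i => c (S n + (n + i))%nat) <= 4 * e).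
  { assert (Htail := tail_sum_le (S (q - 2 * n)) Hn). rewrite rsum_shift in Htail.
    assert (0 <= c (2 * n + 0)%nat) by (apply c_nonneg; lia).
    rewrite (rsum_ext _ _ (fun i => c (2 * n + S i)%nat)) by (intros; f_equal; lia). lra. }
  pose proof (Rle_abs (sum_n_m c (S n) (2 * n))). unfold B. lra. }
assert (Hfx : is_series u (f x)) by apply f_series.
apply Rabs_le. split.
- enough (Sn c n x - B <= f x) by lra.
  apply (is_series_ge_eventually u (f x) (2 * n)); [exact Hfx|].
  intros q Hq. specialize (Hpartial q Hq). apply Rabs_le_between in Hpartial.
  assert (Hlow : Sn c n x - B <= sum_n u q) by lra. exact Hlow.
- enough (f x <= Sn c n x + B) by lra.
  apply (is_series_le_eventually u (f x) (2 * n)); [exact Hfx|].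
  intros q Hq. specialize (Hpartial q Hq). apply Rabs_le_between in Hpartial.
  assert (Hup : sum_n u q <= Sn c n x + B) by lra. exact Hup.
Qed.

End Good_approximation.

(** * Passing to [E_n(f)] *)

Lemma supnorm_finite_le g e : supnorm g = Finite e -> forall x, Rabs (g x) <= e.
Proof.
intros H x. destruct (Lub_Rbar_correct (fun y => exists x, y = Rabs (g x))) as [Hub _].
unfold supnorm in H. rewrite H in Hub. apply Hub. exists x. reflexivity.
Qed.

Lemma supnorm_le g B : (forall x, Rabs (g x) <= B) -> Rbar_le (supnorm g) (Finite B).
Proof.
intros H. destruct (Lub_Rbar_correct (fun y => exists x, y = Rabs (g x))) as [_ Hlub].
apply Hlub. intros y [x ->]. apply H.
Qed.

Lemma Rbar_mult_pos_p_infty C : 0 < C -> Rbar_mult (Finite C) p_infty = p_infty.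
Proof.
intros HC. simpl. destruct (Rle_dec 0 C) as [H|]; [|lra].
destruct (Rle_lt_or_eq_dec 0 C H); [reflexivity|lra].
Qed.

Lemma supnorm_le_mult_En n f g C : 0 < C ->
  (forall T e, trig_poly n T -> supnorm (fun x => f x - T x) = Finite e ->
     forall x, Rabs (g x) <= C * e) ->
  Rbar_le (supnorm g) (Rbar_mult (Finite C) (En n f)).
Proof.
intros HC Hbound. unfold En.
set (A := fun e => exists T, trig_poly n T /\ supnorm (fun x => f x - T x) = Finite e).
assert (HA : forall e, A e -> Rbar_le (supnorm g) (Finite (C * e)))
  by (intros e [T [HT He]]; apply supnorm_le, (Hbound T e HT He)).
assert (HA0 : forall e, A e -> 0 <= e).
{ intros e [T [_ He]]. pose proof (supnorm_finite_le _ _ He 0).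
  pose proof (Rabs_pos (f 0 - T 0)). lra. }
destruct (Glb_Rbar_correct A) as [_ Hglb].
assert (Hnonneg : Rbar_le (Finite 0) (Glb_Rbar A)) by (apply Hglb; intros e He; apply HA0, He).
destruct (supnorm g) as [s| |] eqn:Hs.
- assert (Hlb : Rbar_le (Finite (s / C)) (Glb_Rbar A)).
  { apply Hglb. intros e He. specialize (HA e He). simpl in *.
    apply (Rmult_le_reg_l C); [lra|]. replace (C * (s / C)) with s by (field; lra). exact HA. }
  destruct (Glb_Rbar A) as [l| |]; simpl in Hlb, Hnonneg; try contradiction.
  + simpl. replace s with (C * (s / C)) by (field; lra). apply Rmult_le_compat_l; lra.
  + rewrite Rbar_mult_pos_p_infty by exact HC. exact I.
- assert (Hempty : Rbar_le p_infty (Glb_Rbar A)).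
  { apply Hglb. intros e He. specialize (HA e He). contradiction. }
  destruct (Glb_Rbar A); simpl in Hempty; try contradiction.
  rewrite Rbar_mult_pos_p_infty by exact HC. exact I.
- exact I.
Qed.

Theorem corollary1 (c : nat -> R) (f : R -> R) :
  NBVS (fun n => RtoC (c n)) ->
  (forall x : R, ex_series (fun k => c k * cos (INR k * x))) ->
  (forall x : R, f x = Series (fun k => c k * cos (INR k * x))) ->
  (forall x : R, continuous f x) ->
  (exists C : R, exists N : nat, forall n : nat, (N <= n)%nat ->
     Rabs (sum_n_m c (S n) (2 * n)) <= C * Rabs (maxkc c n)) ->
  exists C : R, exists N : nat, forall n : nat, (N <= n)%nat ->
    Rbar_le (supnorm (fun x => f x - Sn c n x)) (Rbar_mult (Finite C) (En n f)).
Proof.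
intros Hnbvs Hex Hf _ [C [N Hmiddle]].
destruct (NBVS_real c Hnbvs) as [c_nonneg [K [HK c_nbv]]].
assert (f_series : forall x, is_series (fun k => c k * cos (INR k * x)) (f x))
  by (intros x; rewrite Hf; apply Series_correct, Hex).
exists (Rabs C * (12 * (K + 1)) + 4), (Nat.max N 1). intros n Hn.
apply supnorm_le_mult_En.
- pose proof (Rabs_pos C). nra.
- intros T e [a [b HT]] He x.
  apply (partial_sum_error_le c f T a b n e c_nonneg f_series HT
           (supnorm_finite_le _ _ He) K HK c_nbv C); [apply Hmiddle|]; lia.
Qed.
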